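(* Consider the following RSS-based localization setting. A stationary target is at an unknown position $\mathbf{s}=(x,y,0)\in\mathbb{R}^3$. There are $N$ UAVs; UAV $i$ ($1\le i\le N$) takes $M_i\ge 1$ measurements, the $j$-th one at position $\mathbf{u}_{i,j}=(x_{i,j},y_{i,j},h_{i,j})$. Let $r_{i,j}=\sqrt{(x-x_{i,j})^2+(y-y_{i,j})^2}$, $d_{i,j}=\sqrt{r_{i,j}^2+h_{i,j}^2}$, and let $\beta_{i,j}$ be the horizontal UAV–target angle, i.e. $(x_{i,j}-x,\,y_{i,j}-y)=r_{i,j}(\cos\beta_{i,j},\sin\beta_{i,j})$, with $\mathbf{g}_{i,j}=(\cos\beta_{i,j},\sin\beta_{i,j})^T$. The $j$-th measurement of UAV $i$ is $R_{i,j}=p_0-10\gamma\log_{10}(d_{i,j})+\eta_{i,j}$ with known $p_0$, $\gamma>0$ and independent noises $\eta_{i,j}\sim\mathcal{N}(0,\sigma_i^2)$, $\sigma_i>0$. The Fisher information matrix for $(x,y)$ is $$\mathbf{F}=\Big(\frac{10\gamma}{\ln 10}\Big)^2\sum_{i=1}^N\sum_{j=1}^{M_i}\sigma_i^{-2}\frac{r_{i,j}^2}{d_{i,j}^4}\mathbf{g}_{i,j}\mathbf{g}_{i,j}^T.$$ A configuration is feasible if $r_{i,j}\ge r_0$, $h_{i,j}\ge h_0$ for all $i,j$, and $\|\mathbf{u}_{i,j}-\mathbf{u}_{i,j-1}\|\le t_0c_{\max}$ for $2\le j\le M_i$, where $r_0,h_0,t_0>0$, $c_{\max}\ge 0$ are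 given. Problem P is to maximize $\det\mathbf{F}$ over feasible configurations. Assume the UAVs hover, i.e. $c_{\max}=0$, so $\mathbf{u}_{i,j}=\mathbf{u}_i$ (and $r_{i,j}=r_i$, $h_{i,j}=h_i$, $\mathbf{g}_{i,j}=\mathbf{g}_i$) for all $j$. Let $t$ be an index with $M_t\sigma_t^{-2}=\max\{M_i\sigma_i^{-2}:1\le i\le N\}$ and let $r^*=\max\{r_0,h_0\}$. If $M_t\sigma_t^{-2}>\frac12\sum_{i=1}^N M_i\sigma_i^{-2}$, then any configuration satisfying $r_i=r^*$ and $h_i=h_0$ for all $i$, together with $\mathbf{g}_t^T\mathbf{g}_i=0$ for all $i\ne t$, is an optimal solution of problem P.
   Context: The optimization is over UAV positions for a given target position $\mathbf{s}$. *)

From HB Require Import structures.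
From mathcomp Require Import all_boot all_order all_algebra.
From mathcomp Require Import all_classical all_reals all_analysis.
Set Implicit Arguments. Unset Strict Implicit. Unset Printing Implicit Defensive.
Import Order.TTheory GRing.Theory Num.Theory.
Local Open Scope ring_scope.

Record pos3 (R : realType) := P3 { px : R; py : R; ph : R }.

Section UAV.
Variable R : realType.

Definition hdist (x y : R) (u : pos3 R) : R :=
  Num.sqrt ((x - px u) ^+ 2 + (y - py u) ^+ 2).

Definition dist3 (x y : R) (u : pos3 R) : R :=
  Num.sqrt (hdist x y u ^+ 2 + ph u ^+ 2).

Definition pdist (u v : pos3 R) : R :=
  Num.sqrt ((px u - px v) ^+ 2 + (py u - py v) ^+ 2 + (ph u - ph v) ^+ 2).

Definition gvec (x y : R) (u : pos3 R) : 'cV[R]_2 :=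
  \col_(k < 2) (if k == 0 then (px u - x) / hdist x y u
                else (py u - y) / hdist x y u).

(* A configuration: c i j is the position of the (j+1)-th measurement of
   UAV i (indices 0-based; only j < M i matters). *)
Definition FIM (N : nat) (M : 'I_N -> nat) (sigma : 'I_N -> R) (gamma : R)
    (x y : R) (c : 'I_N -> nat -> pos3 R) : 'M[R]_2 :=
  ((10 * gamma) / ln 10) ^+ 2 *:
    \sum_(i < N) \sum_(j < M i)
      ((sigma i) ^- 2 * (hdist x y (c i j) ^+ 2 / dist3 x y (c i j) ^+ 4)) *:
        (gvec x y (c i j) *m (gvec x y (c i j))^T).

Definition feasible (N : nat) (M : 'I_N -> nat) (r0 h0 t0 cmax x y : R)
    (c : 'I_N -> nat -> pos3 R) : Prop :=
  forall (i : 'I_N) (j : nat), (j < M i)%N ->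
    [/\ r0 <= hdist x y (c i j), h0 <= ph (c i j) &
        (0 < j)%N -> pdist (c i j) (c i j.-1) <= t0 * cmax].

Definition optimalP (N : nat) (M : 'I_N -> nat) (sigma : 'I_N -> R)
    (gamma r0 h0 t0 cmax x y : R) (c : 'I_N -> nat -> pos3 R) : Prop :=
  feasible M r0 h0 t0 cmax x y c /\
  forall c', feasible M r0 h0 t0 cmax x y c' ->
    \det (FIM M sigma gamma x y c') <= \det (FIM M sigma gamma x y c).

End UAV.

From HB Require Import structures.
From mathcomp Require Import all_boot all_order all_algebra.
From mathcomp Require Import all_classical all_reals all_analysis.
From mathcomp Require Import ring lra.
Import Order.TTheory GRing.Theory Num.Theory.
Local Open Scope ring_scope.

(* With hovering UAVs, F = k^2 \sum_i w_i g_i g_i^T with w_i = M_i sigma_i^-2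
   r_i^2/d_i^4. As r^2/(r^2+h^2)^2 decreases in h and, as a function of r, peaks
   at r = h, every feasible w_i is at most V_i = M_i sigma_i^-2 r*^2/(r*^2+h0^2)^2,
   the value of the proposed configuration. Written in the orthonormal frame
   (g_t, g_t^perp), det F <= k^4 P Q with P + Q = \sum_i w_i and
   Q <= \sum_(i != t) w_i; when V_t dominates \sum_(i != t) V_i this gives
   P Q <= V_t \sum_(i != t) V_i, with equality when all g_i, i != t, are
   orthogonal to g_t. *)

Lemma dot2_add_cross2 {R : comNzRingType} {C S c s : R} :
  C ^+ 2 + S ^+ 2 = 1 -> c ^+ 2 + s ^+ 2 = 1 ->
  (C * c + S * s) ^+ 2 + (S * c - C * s) ^+ 2 = 1.
Proof. by move=> CS1 cs1; rewrite -[RHS](mulr1 1) -{1}CS1 -cs1; ring. Qed.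

Lemma ler_mul_dominant {R : realDomainType} {p q a b : R} :
  0 <= q -> p + q <= a + b -> q <= b -> b <= a -> p * q <= a * b.
Proof. by move=> q0 pq qb ba; nra. Qed.

Lemma ratio_le_peak {R : realFieldType} {r0 r h : R} :
  0 <= r0 -> r0 <= r -> 0 < h ->
  r ^+ 2 / (r ^+ 2 + h ^+ 2) ^+ 2 <=
  Num.max r0 h ^+ 2 / (Num.max r0 h ^+ 2 + h ^+ 2) ^+ 2.
Proof.
move=> r00 r0r h0; set m := Num.max r0 h.
have pos a : 0 < (a ^+ 2 + h ^+ 2) ^+ 2.
  by rewrite exprn_gt0 // ltr_wpDl ?sqr_ge0 ?exprn_gt0.
rewrite ler_pdivlMr ?pos // mulrAC ler_pdivrMr ?pos // -subr_ge0.
have -> : m ^+ 2 * (r ^+ 2 + h ^+ 2) ^+ 2 - r ^+ 2 * (m ^+ 2 + h ^+ 2) ^+ 2 =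
          (r ^+ 2 - m ^+ 2) * (r ^+ 2 * m ^+ 2 - h ^+ 4) by ring.
have [r0h | hr0] := leP r0 h.
- rewrite /m (max_r r0h).
  have -> : (r ^+ 2 - h ^+ 2) * (r ^+ 2 * h ^+ 2 - h ^+ 4) =
            h ^+ 2 * (r ^+ 2 - h ^+ 2) ^+ 2 by ring.
  by rewrite mulr_ge0 ?sqr_ge0.
- have r0r2 : r0 ^+ 2 <= r ^+ 2 by rewrite ler_sqr ?nnegrE // (le_trans r00).
  have hr2 : h ^+ 2 <= r0 ^+ 2 by rewrite ler_sqr ?nnegrE ?(ltW hr0) ?(ltW h0).
  rewrite /m (max_l (ltW hr0)); apply: mulr_ge0; rewrite subr_ge0 //.
  rewrite (exprM h 2 2) expr2.
  by apply: ler_pM; rewrite ?sqr_ge0 // (le_trans hr2).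
Qed.

Lemma det_mx22 (R : comNzRingType) (A : 'M[R]_2) :
  \det A = A 0 0 * A 1 1 - A 0 1 * A 1 0.
Proof.
rewrite (expand_det_row _ 0) !big_ord_recl big_ord0 /cofactor !det_mx11 !mxE /=.
rewrite expr0 expr1 !mul1r mulN1r addr0 mulrN.
by congr (A _ _ * A _ _ - A _ _ * A _ _); apply/val_inj.
Qed.

Section GramDet.
Context {R : realFieldType} {I : finType}.
Implicit Types (v V c s : I -> R) (t : I).

Definition gram_det v c s :=
  (\sum_i v i * c i ^+ 2) * (\sum_i v i * s i ^+ 2) - (\sum_i v i * (c i * s i)) ^+ 2.

Lemma sum_quadratic v c s (a b d : R) :
  \sum_i v i * (a * c i ^+ 2 + b * (c i * s i) + d * s i ^+ 2) =
  a * \sum_i v i * c i ^+ 2 + b * \sum_i v i * (c i * s i) + d * \sum_i v i * s i ^+ 2.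
Proof. by rewrite !mulr_sumr -!big_split; apply: eq_bigr => i _ /=; ring. Qed.

Lemma gram_det_rotate v c s (C S : R) : C ^+ 2 + S ^+ 2 = 1 ->
  gram_det v c s =
  gram_det v (fun i => C * c i + S * s i) (fun i => S * c i - C * s i).
Proof.
move=> CS1; rewrite /gram_det.
set A := \sum_i v i * c i ^+ 2; set B := \sum_i v i * (c i * s i).
set D := \sum_i v i * s i ^+ 2.
have quad a b d : \sum_i v i * (a * c i ^+ 2 + b * (c i * s i) + d * s i ^+ 2) =
    a * A + b * B + d * D by exact: sum_quadratic.
have -> : \sum_i v i * (C * c i + S * s i) ^+ 2 =
    C ^+ 2 * A + 2 * C * S * B + S ^+ 2 * D.
  by rewrite -quad; apply: eq_bigr => i _; ring.
have -> : \sum_i v i * (S * c i - C * s i) ^+ 2 =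
    S ^+ 2 * A + - (2 * C * S) * B + C ^+ 2 * D.
  by rewrite -quad; apply: eq_bigr => i _; ring.
have -> : \sum_i v i * ((C * c i + S * s i) * (S * c i - C * s i)) =
    C * S * A + (S ^+ 2 - C ^+ 2) * B + - (C * S) * D.
  by rewrite -quad; apply: eq_bigr => i _; ring.
transitivity ((C ^+ 2 + S ^+ 2) ^+ 2 * (A * D - B ^+ 2)); last by ring.
by rewrite CS1 expr1n mul1r.
Qed.

Lemma gram_det_le_dominant t v V c s :
  (forall i, 0 <= v i) -> (forall i, v i <= V i) ->
  (forall i, c i ^+ 2 + s i ^+ 2 = 1) ->
  \sum_(i | i != t) V i <= V t ->
  gram_det v c s <= V t * \sum_(i | i != t) V i.
Proof.
move=> v0 vV cs1 dom.
(* In the frame (g_t, g_t^perp) the determinant is P Q - X^2 <= P Q, where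
   P + Q = \sum_i v i and g_t contributes nothing to Q. *)
rewrite (gram_det_rotate _ _ _ _ _ (cs1 t)) /gram_det.
set P := \sum_i _ * _ ^+ 2; set Q := \sum_i _ * (_ - _) ^+ 2.
have Q0 : 0 <= Q by apply: sumr_ge0 => i _; rewrite mulr_ge0 ?sqr_ge0.
have PQ : P + Q <= V t + \sum_(i | i != t) V i.
  rewrite [leRHS](_ : _ = \sum_i V i); last by rewrite [RHS](bigD1 t).
  rewrite -big_split /=; apply: ler_sum => i _.
  by rewrite -mulrDr dot2_add_cross2 ?mulr1.
have Qle : Q <= \sum_(i | i != t) V i.
  rewrite /Q (bigD1 t) //= [s t * _]mulrC subrr expr0n mulr0 add0r.
  apply: ler_sum => i _; apply: le_trans (vV i).
  by rewrite ler_piMr // -(dot2_add_cross2 (cs1 t) (cs1 i)) ler_wpDl ?sqr_ge0.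
by apply: le_trans _ (ler_mul_dominant Q0 PQ Qle dom); rewrite gerBl sqr_ge0.
Qed.

Lemma gram_det_orthogonal t v c s :
  (forall i, c i ^+ 2 + s i ^+ 2 = 1) ->
  (forall i, i != t -> c t * c i + s t * s i = 0) ->
  gram_det v c s = v t * \sum_(i | i != t) v i.
Proof.
move=> cs1 orth; rewrite (gram_det_rotate _ _ _ _ _ (cs1 t)) /gram_det.
have att : c t * c t + s t * s t = 1 by rewrite -!expr2 cs1.
have btt : s t * c t - c t * s t = 0 by rewrite mulrC subrr.
have bti i : i != t -> (s t * c i - c t * s i) ^+ 2 = 1.
  by move=> it; rewrite -(dot2_add_cross2 (cs1 t) (cs1 i)) orth // expr0n add0r.
have -> : \sum_i v i * (c t * c i + s t * s i) ^+ 2 = v t.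
  rewrite (bigD1 t) //= att expr1n mulr1 big1 ?addr0 // => i it.
  by rewrite orth // expr0n mulr0.
have -> : \sum_i v i * (s t * c i - c t * s i) ^+ 2 = \sum_(i | i != t) v i.
  rewrite (bigD1 t) //= btt expr0n mulr0 add0r.
  by apply: eq_bigr => i it; rewrite bti // mulr1.
have -> : \sum_i v i * ((c t * c i + s t * s i) * (s t * c i - c t * s i)) = 0.
  rewrite (bigD1 t) //= btt !mulr0 add0r big1 // => i it.
  by rewrite orth // mul0r mulr0.
by rewrite expr0n subr0.
Qed.

End GramDet.

Section UAVGeometry.
Context {R : realType}.
Implicit Types (x y : R) (p q : pos3 R).

Definition cos_beta x y p := (px p - x) / hdist x y p.
Definition sin_beta x y p := (py p - y) / hdist x y p.
Definition info_density x y p := hdist x y p ^+ 2 / dist3 x y p ^+ 4.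

Lemma hdist_sqr x y p : hdist x y p ^+ 2 = (px p - x) ^+ 2 + (py p - y) ^+ 2.
Proof. by rewrite sqr_sqrtr; [ring | rewrite addr_ge0 ?sqr_ge0]. Qed.

Lemma info_densityE x y p :
  info_density x y p = hdist x y p ^+ 2 / (hdist x y p ^+ 2 + ph p ^+ 2) ^+ 2.
Proof.
have d2 : dist3 x y p ^+ 2 = hdist x y p ^+ 2 + ph p ^+ 2.
  by rewrite sqr_sqrtr // addr_ge0 ?sqr_ge0.
by rewrite /info_density -d2 -exprM.
Qed.

Lemma cos2_add_sin2_beta x y p :
  0 < hdist x y p -> cos_beta x y p ^+ 2 + sin_beta x y p ^+ 2 = 1.
Proof.
move=> r0; rewrite !expr_div_n -mulrDl -hdist_sqr divff //.
by rewrite expf_neq0 // gt_eqF.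
Qed.

Lemma gvec_dot x y p q :
  ((gvec x y p)^T *m gvec x y q) 0 0 =
  cos_beta x y p * cos_beta x y q + sin_beta x y p * sin_beta x y q.
Proof. by rewrite mxE !big_ord_recl big_ord0 !mxE /= addr0. Qed.

Lemma info_density_le_peak x y (r0 h0 : R) p :
  0 <= r0 -> 0 < h0 -> r0 <= hdist x y p -> h0 <= ph p ->
  info_density x y p <=
  Num.max r0 h0 ^+ 2 / (Num.max r0 h0 ^+ 2 + h0 ^+ 2) ^+ 2.
Proof.
move=> r00 h00 r0r h0h; rewrite info_densityE.
apply: le_trans _ (ratio_le_peak r00 r0r h00).
have h0p : 0 < ph p := lt_le_trans h00 h0h.
have pos b : 0 < b -> 0 < (hdist x y p ^+ 2 + b ^+ 2) ^+ 2.
  by move=> b0; rewrite exprn_gt0 // ltr_wpDl ?sqr_ge0 ?exprn_gt0.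
apply: ler_wpM2l; first exact: sqr_ge0.
rewrite lef_pV2 ?posrE ?pos // ler_sqr ?nnegrE ?addr_ge0 ?sqr_ge0 // lerD2l.
by rewrite ler_sqr ?nnegrE ?(ltW h00) ?(ltW h0p).
Qed.

Lemma pdist_le0 (u v : pos3 R) : pdist u v <= 0 -> u = v.
Proof.
rewrite /pdist -sqrtr0 ler_sqrt // => sum_le0.
have {sum_le0} : (px u - px v) ^+ 2 + (py u - py v) ^+ 2 + (ph u - ph v) ^+ 2 == 0.
  by rewrite eq_le sum_le0 !addr_ge0 ?sqr_ge0.
rewrite !paddr_eq0 ?addr_ge0 ?sqr_ge0 // !sqrf_eq0 !subr_eq0.
by case: u v => ? ? ? [? ? ?] /= /andP[/andP[/eqP-> /eqP->] /eqP->].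
Qed.

Lemma feasible_hover {N : nat} {M : 'I_N -> nat} {r0 h0 t0 x y : R}
    {c : 'I_N -> nat -> pos3 R} :
  feasible M r0 h0 t0 0 x y c -> forall i j, (j < M i)%N -> c i j = c i 0%N.
Proof.
move=> feas i; elim=> [//|j IHj] ltjM.
have [_ _ /(_ isT)] := feas i j.+1 ltjM.
by rewrite mulr0 => /pdist_le0 ->; apply/IHj/ltnW.
Qed.

Lemma det_FIM_hover {N : nat} {M : 'I_N -> nat} {sigma : 'I_N -> R} {gamma x y : R}
    {c : 'I_N -> nat -> pos3 R} {p : 'I_N -> pos3 R} :
  (forall i j, (j < M i)%N -> c i j = p i) ->
  \det (FIM M sigma gamma x y c) =
  ((10 * gamma) / ln 10) ^+ 2 ^+ 2 *
  gram_det (fun i => (M i)%:R / sigma i ^+ 2 * info_density x y (p i))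
           (fun i => cos_beta x y (p i)) (fun i => sin_beta x y (p i)).
Proof.
move=> hover; rewrite /FIM detZ det_mx22 /gram_det; congr (_ * _).
pose w i := (M i)%:R / sigma i ^+ 2 * info_density x y (p i).
have entry k l : (\sum_(i < N) \sum_(j < M i)
    (sigma i ^- 2 * (hdist x y (c i j) ^+ 2 / dist3 x y (c i j) ^+ 4)) *:
    (gvec x y (c i j) *m (gvec x y (c i j))^T)) k l =
    \sum_i w i * (gvec x y (p i) k 0 * gvec x y (p i) l 0).
  rewrite summxE; apply: eq_bigr => i _; rewrite summxE.
  under eq_bigr => j _ do rewrite hover // !mxE big_ord1 !mxE.
  by rewrite sumr_const card_ord -mulr_natl /w /info_density !mxE !mulrA.
rewrite !entry expr2; congr (_ * _ - _ * _); apply: eq_bigr => i _;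
  by rewrite /w /cos_beta /sin_beta !mxE /=; ring.
Qed.

End UAVGeometry.

Theorem theorem4 (R : realType) (N : nat) (M : 'I_N -> nat)
    (sigma : 'I_N -> R) (gamma r0 h0 t0 cmax x y : R)
    (t : 'I_N) (u : 'I_N -> pos3 R) :
  (forall i, (1 <= M i)%N) ->
  (forall i, 0 < sigma i) ->
  0 < gamma -> 0 < r0 -> 0 < h0 -> 0 < t0 ->
  cmax = 0 ->
  (forall i, (M i)%:R / sigma i ^+ 2 <= (M t)%:R / sigma t ^+ 2) ->
  (M t)%:R / sigma t ^+ 2 > 2^-1 * \sum_(i < N) (M i)%:R / sigma i ^+ 2 ->
  (forall i, hdist x y (u i) = Num.max r0 h0) ->
  (forall i, ph (u i) = h0) ->
  (forall i, i != t -> ((gvec x y (u t))^T *m gvec x y (u i)) 0 0 = 0) ->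
  optimalP M sigma gamma r0 h0 t0 cmax x y (fun i _ => u i).
Proof.
(* The maximality of t follows from the majority hypothesis. *)
move=> M_ge1 _ _ r0_gt0 h0_gt0 _ -> _ majority u_r u_h u_orth.
set a := fun i => (M i)%:R / sigma i ^+ 2.
set K := Num.max r0 h0 ^+ 2 / (Num.max r0 h0 ^+ 2 + h0 ^+ 2) ^+ 2.
set V := fun i => a i * K.
have u_unit i : cos_beta x y (u i) ^+ 2 + sin_beta x y (u i) ^+ 2 = 1.
  by rewrite cos2_add_sin2_beta // u_r lt_max r0_gt0.
have u_info i : info_density x y (u i) = K by rewrite info_densityE u_r u_h.
split=> [i j _ | c feas].
  split=> [||_]; rewrite ?u_r ?u_h ?le_max ?lexx //.
  by rewrite /pdist !subrr expr0n /= !addr0 sqrtr0 mulr0.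
rewrite (det_FIM_hover (p := fun i => c i 0%N) (feasible_hover feas)).
rewrite (det_FIM_hover (p := u)) //.
rewrite [in leRHS](gram_det_orthogonal t _ _ _ u_unit) => [|i /u_orth];
  last by rewrite gvec_dot.
rewrite u_info; under eq_bigr do rewrite u_info.
apply: ler_wpM2l; first exact: sqr_ge0.
apply: (gram_det_le_dominant t _ V).
- by move=> i; rewrite !mulr_ge0 ?invr_ge0 ?divr_ge0 ?sqr_ge0 ?exprn_ge0 ?sqrtr_ge0.
- move=> i; have [r0_le h0_le _] := feas i 0%N (M_ge1 i).
  apply: ler_wpM2l; first by rewrite divr_ge0 ?sqr_ge0.
  exact: info_density_le_peak (ltW r0_gt0) h0_gt0 r0_le h0_le.
- move=> i; have [r0_le _ _] := feas i 0%N (M_ge1 i).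
  by rewrite cos2_add_sin2_beta // (lt_le_trans r0_gt0).
- rewrite /V -mulr_suml; apply: ler_wpM2r.
    by rewrite divr_ge0 ?sqr_ge0.
  by move: majority; rewrite /a (bigD1 t) //=; lra.
Qed.
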